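(* Let $t$ be a positive integer that is not a power of two. Then the number of $k\in\{0,1,\dots,t\}$ for which $\mathfrak{a}_t(t,k)$ is odd is an odd integer greater than one (in particular, not a power of two).
   Context: Let $\mathfrak{a}_t:\mathbb{Z}\times\mathbb{Z}\to\mathbb{Z}$ be the unique function satisfying: (i) $\mathfrak{a}_t(0,0)=1$; (ii) $\mathfrak{a}_t(n,k)=0$ if $n<0$, or $k<0$, or $k>\min\{\lfloor (n-1+t)/2\rfloor, n\}$; (iii) $\mathfrak{a}_t(n,k)=\mathfrak{a}_t(n-1,k-1)+\mathfrak{a}_t(n-1,k)$ for all other integer pairs $(n,k)$. *)

From mathcomp Require Import all_boot.
Set Implicit Arguments. Unset Strict Implicit. Unset Printing Implicit Defensive.

(* frak a_t(n,k) restricted to n, k >= 0 (it vanishes for negative arguments).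
   For t >= 1 the bound floor((n-1+t)/2) is a nonnegative integer, computed
   here in nat as (n + t - 1)./2; the only truncation case n = t = 0 is
   the pair (0,0), where the value is 1 by clause (i). *)
Fixpoint frak_a (t n k : nat) {struct n} : nat :=
  match n with
  | 0 => if k == 0 then 1 else 0
  | n'.+1 =>
      if k > minn ((n + t - 1)./2) n then 0
      else (match k with 0 => 0 | k'.+1 => frak_a t n' k' end) + frak_a t n' k
  end.

Example ex1 : [seq frak_a 3 3 k | k <- iota 0 4] = [:: 1; 3; 3; 0]. Proof. by []. Qed.

(* Below row t the recursion of a_t is Pascal's rule with an inactive bound,
   so a_t(n,k) = C(n,k) for n < t, while in row t only the entry k = t is cut
   off: a_t(t,k) = C(t,k) for k < t and a_t(t,t) = 0.  Since the odd entries
   of row t of Pascal's triangle add up to 2^t modulo 2, their number is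
   even, and removing the odd entry C(t,t) = 1 leaves an odd count.  For
   t = 2^v m with m odd and m > 1, both C(t,0) and C(t,2^v) are odd and
   0 < 2^v < t, so the count exceeds one. *)

From mathcomp Require Import all_boot.
From mathcomp Require Import zify.

Lemma frak_a_bin t n k : n < t -> frak_a t n k = 'C(n, k).
Proof.
elim: n k => [|n IHn] k ltnt /=; first by case: k.
have -> : minn ((n.+1 + t - 1)./2) n.+1 = n.+1.
  by apply/minn_idPr; rewrite geq_half_double -addnn; lia.
case: ltnP => lekn; first by rewrite bin_small.
case: k lekn => [|k] lekn; first by rewrite IHn ?bin0 // ltnW.
by rewrite !IHn ?binS 1?addnC // ltnW.
Qed.

Lemma frak_a_diag t k :
  0 < t -> frak_a t t k = if k < t then 'C(t, k) else 0.
Proof.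
case: t => [//|t] _ /=.
have -> : minn ((t.+1 + t.+1 - 1)./2) t.+1 = t.
  have -> : t.+1 + t.+1 - 1 = true + t.*2 by rewrite -addnn; lia.
  by rewrite half_bit_double; apply/minn_idPl.
rewrite ltnS; case: ltnP => lekt //.
case: k lekt => [|k] lekt; first by rewrite !frak_a_bin ?bin0.
by rewrite !frak_a_bin // ?binS addnC // ltnW.
Qed.

Lemma odd_sum_odd (I : Type) (r : seq I) (P : pred I) (F : I -> nat) :
  odd (\sum_(i <- r | P i) F i) = odd (\sum_(i <- r | P i) odd (F i)).
Proof. by elim/big_rec2: _ => // i a b _ IH; rewrite !oddD IH oddb. Qed.

Lemma sum_bin n : \sum_(k < n.+1) 'C(n, k) = 2 ^ n.
Proof.
by rewrite -[2]/(1 + 1) expnDn; apply: eq_bigr => k _; rewrite !exp1n !muln1.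
Qed.

Lemma even_count_odd_bin n :
  0 < n -> ~~ odd (\sum_(k < n.+1) odd 'C(n, k)).
Proof. by move=> n_gt0; rewrite -odd_sum_odd sum_bin oddX negb_and -lt0n n_gt0. Qed.

(* Writing j.+1 = 2^a * b with b odd and a < v, the factor n - j in
   Pascal's recurrence is 2^a times an odd number, so the parity is kept. *)
Lemma odd_bin_low n v j : 2 ^ v %| n.+1 -> j < 2 ^ v -> odd 'C(n, j).
Proof.
case/dvdnP=> q n1E; elim: j => [|j IHj] ltjv; first by rewrite bin0.
have [b b_odd j1E] := pfactor_coprime (isT : prime 2) (ltn0Sn j).
set a := logn 2 j.+1 in j1E; rewrite coprime2n in b_odd.
have b_gt0 : 0 < b by case: b b_odd {j1E}.
have ltav : a < v.
  rewrite -(ltn_exp2l _ _ (isT : 1 < 2)); apply: leq_ltn_trans ltjv.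
  by rewrite j1E leq_pmull.
have expvE : 2 ^ v = 2 ^ a * 2 ^ (v - a) by rewrite -expnD subnKC // ltnW.
have q_gt0 : 0 < q by case: q n1E.
have leb : b <= 2 ^ (v - a) * q.
  rewrite -(leq_pmul2l (expn_gt0 2 a)) mulnA -expvE mulnC -j1E.
  by apply: leq_trans (ltnW ltjv) _; rewrite leq_pmulr.
have nBjE : n - j = 2 ^ a * (2 ^ (v - a) * q - b).
  rewrite mulnBr mulnA -expvE [2 ^ a * b]mulnC -j1E; lia.
have := mul_bin_left n j; rewrite nBjE {1}j1E [b * _]mulnC -!mulnA.
move/eqP; rewrite eqn_pmul2l ?expn_gt0 // => /eqP/(congr1 odd).
rewrite !oddM IHj ?(ltnW ltjv) // b_odd andbT /= => ->.
by rewrite oddB // b_odd oddM oddX subn_eq0 leqNgt ltav.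
Qed.

Lemma odd_bin_pow2_mul v m : odd m -> odd 'C(2 ^ v * m, 2 ^ v).
Proof.
move=> m_odd; have m_gt0 : 0 < m by case: m m_odd.
have := mul_bin_diag (2 ^ v * m) (2 ^ v).-1.
rewrite prednK ?expn_gt0 // -mulnA => /eqP.
rewrite eqn_pmul2l ?expn_gt0 // => /eqP <-.
rewrite oddM m_odd; apply: (odd_bin_low _ v).
  by rewrite prednK ?muln_gt0 ?expn_gt0 ?dvdn_mulr.
by rewrite prednK ?expn_gt0.
Qed.

Lemma exists_odd_bin_inner t :
  0 < t -> (forall e : nat, t <> 2 ^ e) -> exists2 k, 0 < k < t & odd 'C(t, k).
Proof.
move=> t_gt0 not_pow2.
have [m m_odd tE] := pfactor_coprime (isT : prime 2) t_gt0.
set v := logn 2 t in tE; rewrite coprime2n in m_odd.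
have m_gt1 : 1 < m.
  case: m m_odd tE => [|[|m]] // _ tE.
  by case: (not_pow2 v); rewrite tE mul1n.
exists (2 ^ v); last by rewrite tE mulnC odd_bin_pow2_mul.
by rewrite expn_gt0 tE mulnC ltn_Pmulr ?expn_gt0.
Qed.

Theorem lemma4p4 (t : nat) :
  0 < t -> (forall e : nat, t <> 2 ^ e) ->
  let c := #|[set k : 'I_t.+1 | odd (frak_a t t k)]| in
  odd c /\ 1 < c.
Proof.
move=> t_gt0 not_pow2 c.
have oddE (k : nat) : odd (frak_a t t k) = (k < t) && odd 'C(t, k).
  by rewrite frak_a_diag //; case: ltnP.
have cE : c.+1 = \sum_(k < t.+1) odd 'C(t, k).
  rewrite /c -sum1dep_card big_mkcond !big_ord_recr /= oddE ltnn addn0 binn addn1.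
  by congr _.+1; apply: eq_bigr => k _; rewrite oddE ltn_ord; case: odd.
split; first by have := even_count_odd_bin t t_gt0; rewrite -cE /= negbK.
have [k /andP[k_gt0 ltkt] k_odd] := exists_odd_bin_inner t t_gt0 not_pow2.
have ltkt1 : k < t.+1 by rewrite ltnW.
have : [set ord0; inord k] \subset [set k : 'I_t.+1 | odd (frak_a t t k)].
  by apply/subsetP => i; rewrite !inE oddE => /pred2P[]->;
     rewrite ?inordK // ?bin0 ?t_gt0 ?ltkt.
move/subset_leq_card; rewrite cards2; apply: leq_trans.
by rewrite eq_sym -val_eqE /= inordK // -lt0n k_gt0.
Qed.
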